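(* Let $w$ be a positive integer constant. There exists a constant $h>0$ such that if $p>0$ is a function of $n$ and $f$ is a $w$-DNF on $\{0,1\}^{L_{d'}}$, then $f\circ\Phi_{d'}$ can be represented as a decision tree of height at most $h\ln(p)$ with probability $1-O(1/p)$.
   Context: Fix $k\ge2$ and $0\le\theta<1$; $n=k^d$ with $d'\le d$. $L_r$ is the set of depth-$r$ vertices of the complete $k$-ary tree, $\mathrm{parent}(v)$ the parent of $v$. $R_\theta$ is the distribution on $\{0,1,*\}$ giving $0$ and $1$ each probability $(1-\theta)/2$ and $*$ probability $\theta$. $\Phi_{d'}:\{0,1\}^{L_{d'-1}}\to\{0,1\}^{L_{d'}}$ is the random map defined by drawing $r\in\{0,1,*\}^{L_{d'}}$ with i.i.d. $R_\theta$ coordinates and setting $(\Phi_{d'}(x))_v=r_v$ if $r_v\in\{0,1\}$, and $x_{\mathrm{parent}(v)}$ if $r_v=*$. A $w$-DNF is an OR of ANDs of at most $w$ literals. *)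

From HB Require Import structures.
From mathcomp Require Import all_boot all_order all_algebra.
From mathcomp Require Import all_classical all_reals all_analysis.
Set Implicit Arguments. Unset Strict Implicit. Unset Printing Implicit Defensive.
Import Order.TTheory GRing.Theory Num.Theory.
Local Open Scope ring_scope.

(* Vertices of depth r of the complete k-ary tree: 'I_(k^r).
   The children of u are u*k + j (j < k), so parent v = v %/ k. *)
Definition L (k r : nat) : finType := 'I_(k ^ r).

Lemma parent_lt (k r : nat) (v : 'I_(k ^ r)) : (v %/ k < k ^ r.-1)%N.
Proof.
case: v => v /=; case: r => [|r] /=.
  by rewrite expn0 ltnS leqn0 => /eqP ->; rewrite div0n.
case: k => [|k]; first by rewrite exp0n.
by move=> Hv; rewrite ltn_divLR // -expnSr.
Qed.

Definition parent (k r : nat) (v : L k r) : L k r.-1 :=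
  Ordinal (parent_lt v).

(* A random string r in {0,1,*}^{L_{d'}}: None encodes *, Some b encodes b. *)
Definition Phi (k d' : nat) (r : {ffun L k d' -> option bool})
  (x : {ffun L k d'.-1 -> bool}) : {ffun L k d' -> bool} :=
  [ffun v => if r v is Some b then b else x (parent v)].

Definition weight (R : realType) (theta : R) (k d' : nat)
  (r : {ffun L k d' -> option bool}) : R :=
  \prod_(v : L k d') (if r v is Some _ then (1 - theta) / 2 else theta).

Definition prob (R : realType) (theta : R) (k d' : nat)
  (E : {ffun L k d' -> option bool} -> Prop) : R :=
  \sum_(r : {ffun L k d' -> option bool} | `[< E r >]) weight theta r.

(* DNFs: a list of terms, each a list of literals (variable, required value). *)
Definition DNF (V : Type) := seq (seq (V * bool)).

Definition evalDNF (V : eqType) (f : DNF V) (x : V -> bool) : bool :=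
  has (fun t => all (fun l => x l.1 == l.2) t) f.

Definition is_wDNF (V : Type) (w : nat) (f : DNF V) : bool :=
  all (fun t => (size t <= w)%N) f.

(* Decision trees: Node v t0 t1 queries x v, goes to t0 if false, t1 if true. *)
Inductive DT (V : Type) : Type :=
| Leaf of bool
| Node of V & DT V & DT V.

Fixpoint evalDT (V : Type) (T : DT V) (x : V -> bool) : bool :=
  match T with
  | Leaf b => b
  | Node v t0 t1 => if x v then evalDT t1 x else evalDT t0 x
  end.

Fixpoint height (V : Type) (T : DT V) : nat :=
  match T with
  | Leaf _ => 0
  | Node _ t0 t1 => (maxn (height t0) (height t1)).+1
  end.

From HB Require Import structures.
From mathcomp Require Import all_boot all_order all_algebra.
From mathcomp Require Import all_classical all_reals all_analysis.
From mathcomp Require Import ring lra.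
Import Order.TTheory GRing.Theory Num.Theory.
Local Open Scope ring_scope.
Set Implicit Arguments. Unset Strict Implicit. Unset Printing Implicit Defensive.

(** Induction on the width [w], with [C = 1] and a height constant depending only
    on [w] and on a lower bound [beta] for the probability that a coordinate of the
    random string is fixed to a given bit.  After discarding inconsistent terms,
    pick greedily a maximal family [M] of terms with pairwise disjoint parent sets.
    The events "r fixes t" for [t] in [M] are independent, each of probability at
    least [beta ^ w]; so if [|M| >= ln p / rate w] some term is fixed, and [f] is
    constantly true, with probability at least [1 - 1/p].  Otherwise query the at
    most [w |M|] parents of [M]: every remaining term loses a literal, so for each
    of the [2 ^ (w |M|)] answers the restricted formula is a [(w-1)]-DNF.  Applying
    the induction hypothesis with [p 2 ^ (w |M|)] in place of [p], conditionally on
    the coordinates below the queried parents, and a union bound over the answers,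
    all restrictions collapse with probability at least [1 - 1/p]. *)

Record pdist (R : realType) (T : finType) := PDist {
  pdist_fun :> T -> R;
  pdist_ge0 : forall t, 0 <= pdist_fun t;
  pdist_sum1 : \sum_t pdist_fun t = 1 }.

Section ProductProbability.
Variables (R : realType) (T : finType) (mu : pdist R T) (V : finType).
Implicit Types (r a : {ffun V -> T}) (E F : {ffun V -> T} -> Prop).

Definition pmass r : R := \prod_v mu (r v).

Definition pr E : R := \sum_(r | `[< E r >]) pmass r.

Lemma pmass_ge0 r : 0 <= pmass r.
Proof. by apply: prodr_ge0 => v _; apply: pdist_ge0. Qed.

Lemma sum_pmass : \sum_r pmass r = 1.
Proof.
rewrite -(bigA_distr_bigA (fun _ t => mu t)) /=.
by rewrite big1 // => v _; apply: pdist_sum1.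
Qed.

Lemma pr_mkcond E : pr E = \sum_r (if `[< E r >] then pmass r else 0).
Proof. by rewrite /pr big_mkcond. Qed.

Lemma pr_ge0 E : 0 <= pr E.
Proof. by apply: sumr_ge0 => r _; apply: pmass_ge0. Qed.

Lemma le_pr E F : (forall r, E r -> F r) -> pr E <= pr F.
Proof.
move=> EF; rewrite !pr_mkcond; apply: ler_sum => r _.
case: (asboolP (E r)) => [/EF Fr | _]; first by rewrite asboolT.
by case: ifP => _ //; apply: pmass_ge0.
Qed.

Lemma eq_pr E F : (forall r, E r <-> F r) -> pr E = pr F.
Proof. by move=> EF; apply/eqP; rewrite eq_le !le_pr // => r /EF. Qed.

Lemma prT : pr (fun _ => True) = 1.
Proof. by rewrite pr_mkcond -sum_pmass; apply: eq_bigr => r _; rewrite asboolT. Qed.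

Lemma pr_le1 E : pr E <= 1.
Proof. by rewrite -prT; apply: le_pr. Qed.

Lemma prC E : pr (fun r => ~ E r) = 1 - pr E.
Proof.
rewrite -sum_pmass (bigID (fun r => `[< E r >])) /= addrC addrK /pr.
by apply: eq_bigl => r; rewrite asbool_neg.
Qed.

Lemma pr_exists_le (I : finType) (A : {set I}) (E : I -> {ffun V -> T} -> Prop) :
  pr (fun r => exists2 i, i \in A & E i r) <= \sum_(i in A) pr (E i).
Proof.
rewrite (eq_bigr (fun i => \sum_r (if `[< E i r >] then pmass r else 0)));
  last by move=> i _; rewrite pr_mkcond.
rewrite pr_mkcond exchange_big /=; apply: ler_sum => r _.
have sum_ge0 : 0 <= \sum_(i in A) (if `[< E i r >] then pmass r else 0).
  by apply: sumr_ge0 => i _; case: ifP => _ //; apply: pmass_ge0.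
case: asboolP => [[i Ai Ei] | _]; last exact: sum_ge0.
rewrite (bigD1 i) //= asboolT // lerDl.
by apply: sumr_ge0 => j _; case: ifP => _ //; apply: pmass_ge0.
Qed.

Lemma pr_forall_ge (I : finType) (A : {set I}) (E : I -> {ffun V -> T} -> Prop) e :
  (forall i, i \in A -> 1 - e <= pr (E i)) ->
  1 - #|A|%:R * e <= pr (fun r => forall i, i \in A -> E i r).
Proof.
move=> E_ge; have := pr_exists_le A (fun i r => ~ E i r).
have -> : pr (fun r => exists2 i, i \in A & ~ E i r) =
          1 - pr (fun r => forall i, i \in A -> E i r).
  rewrite -prC; apply: eq_pr => r; split=> [[i Ai nEi] allE | nallE].
    exact/nEi/allE.
  apply: contrapT => nex; apply: nallE => i Ai; apply: contrapT => nEi.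
  exact: nex (ex_intro2 _ _ i Ai nEi).
have : \sum_(i in A) pr (fun r => ~ E i r) <= #|A|%:R * e.
  rewrite -sum1_card natr_sum big_distrl /=; apply: ler_sum => i Ai.
  by rewrite prC mul1r lerBlDr addrC -lerBlDr; apply: E_ge.
lra.
Qed.

Lemma pr_agree (S : {set V}) (c : V -> T) :
  pr (fun r : {ffun V -> T} => {in S, r =1 c}) = \prod_(v in S) mu (c v).
Proof.
pose F v t := if v \in S then (if t == c v then mu t else 0) else mu t.
transitivity (\sum_(r : {ffun V -> T}) \prod_v F v (r v)).
  rewrite pr_mkcond; apply: eq_bigr => r _; case: asboolP => [rc | nrc].
    by apply: eq_bigr => v _; rewrite /F; case: ifP => // vS; rewrite rc ?eqxx.
  have [v vS rv] : exists2 v, v \in S & r v != c v.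
    apply: contrapT => nex; apply: nrc => v vS; apply: contrapT => rv.
    exact: nex (ex_intro2 _ _ v vS (introN eqP rv)).
  by rewrite (bigD1 v) //= /F vS (negbTE rv) mul0r.
rewrite -(bigA_distr_bigA F) [RHS]big_mkcond /=; apply: eq_bigr => v _.
rewrite /F; case: ifP => vS; last exact: pdist_sum1.
by rewrite -big_mkcond big_pred1_eq.
Qed.

Lemma pr0 : pr (fun _ => False) = 0.
Proof. by have := prC (fun _ => True); rewrite prT subrr => <-; apply: eq_pr. Qed.

Definition depends_on (B : {set V}) E := forall r r', {in B, r =1 r'} -> E r -> E r'.

Lemma depends_onE B E r r' : depends_on B E -> {in B, r =1 r'} -> E r <-> E r'.
Proof. by move=> dE rr'; split; apply: dE => // v /rr'. Qed.

Section Conditioning.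
Variable B : {set V}.

Definition merge a r : {ffun V -> T} := [ffun v => if v \in B then a v else r v].

Lemma pmass_merge a r : pmass (merge a r) * pmass (merge r a) = pmass a * pmass r.
Proof.
rewrite /pmass -!big_split /=; apply: eq_bigr => v _; rewrite !ffunE.
by case: (v \in B); rewrite // mulrC.
Qed.

Lemma mergeK a r : merge (merge a r) (merge r a) = a.
Proof. by apply/ffunP => v; rewrite !ffunE; case: (v \in B). Qed.

(* (a, r) |-> (merge a r, merge r a) is an involution preserving [pmass a * pmass r]. *)
Lemma sum_merge (G : {ffun V -> T} -> R) :
  \sum_a \sum_r pmass a * pmass r * G (merge a r) = \sum_t pmass t * G t.
Proof.
pose swap (ar : {ffun V -> T} * {ffun V -> T}) := (merge ar.1 ar.2, merge ar.2 ar.1).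
have swapK : involutive swap by case=> a r; rewrite /swap /= !mergeK.
have -> : \sum_t pmass t * G t = \sum_a \sum_r pmass a * pmass r * G a.
  apply: eq_bigr => a _; rewrite -[LHS]mulr1 -sum_pmass big_distrr /=.
  by apply: eq_bigr => r _; rewrite mulrAC.
rewrite !pair_big (reindex_inj (inv_inj swapK)) /=.
by apply: eq_bigr => -[a r] _ /=; rewrite pmass_merge mergeK.
Qed.

Lemma pr_diag (A : {ffun V -> T} -> {ffun V -> T} -> Prop) :
  (forall r, depends_on B (A^~ r)) -> (forall a, depends_on (~: B) (A a)) ->
  pr (fun r => A r r) = \sum_a pmass a * pr (A a).
Proof.
move=> dA1 dA2.
have ind E : pr E = \sum_r pmass r * (if `[< E r >] then 1 else 0).
  by rewrite pr_mkcond; apply: eq_bigr => r _; case: ifP; rewrite ?mulr1 ?mulr0.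
rewrite ind -sum_merge; apply: eq_bigr => a _; rewrite ind big_distrr /=.
apply: eq_bigr => r _; rewrite mulrA.
have onB : {in B, merge a r =1 a} by move=> v vB; rewrite ffunE vB.
have offB : {in ~: B, merge a r =1 r} by move=> v; rewrite inE ffunE => /negbTE ->.
have AmergeE : A (merge a r) (merge a r) <-> A a r.
  exact: iff_trans (depends_onE (dA1 _) onB) (depends_onE (dA2 a) offB).
by rewrite (asbool_equiv_eq AmergeE).
Qed.

Lemma pr_diag_ge (A : {ffun V -> T} -> {ffun V -> T} -> Prop) e :
  (forall r, depends_on B (A^~ r)) -> (forall a, depends_on (~: B) (A a)) ->
  (forall a, e <= pr (A a)) -> e <= pr (fun r => A r r).
Proof.
move=> dA1 dA2 A_ge; rewrite pr_diag // -[e]mul1r -sum_pmass big_distrl /=.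
by apply: ler_sum => a _; apply: ler_wpM2l; [apply: pmass_ge0 | apply: A_ge].
Qed.

Lemma pr_indep P Q : depends_on B P -> depends_on (~: B) Q ->
  pr (fun r => P r /\ Q r) = pr P * pr Q.
Proof.
move=> dP dQ; rewrite (pr_diag (A := fun a r => P a /\ Q r)); first last.
- by move=> a r r' rr' [Pa Qr]; split; last exact: dQ Qr.
- by move=> r a a' aa' [Pa Qr]; split; first exact: dP Pa.
rewrite pr_mkcond big_distrl /=; apply: eq_bigr => a _.
case: asboolP => Pa; first by congr (_ * _); apply: eq_pr => r; tauto.
by rewrite mul0r (_ : pr _ = 0) ?mulr0 // -pr0; apply: eq_pr => r; tauto.
Qed.
End Conditioning.
End ProductProbability.

Section DecisionTrees.
Variables (R : realType) (U : eqType).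

Definition dt_computable (H : R) (g : (U -> bool) -> bool) :=
  exists T : DT U, (height T)%:R <= H /\ forall x, evalDT T x = g x.

Lemma eq_dt_computable H g g' : g =1 g' -> dt_computable H g -> dt_computable H g'.
Proof. by move=> gg' [T [hT eT]]; exists T; split=> // x; rewrite eT. Qed.

Lemma dt_computable_le H H' g : H <= H' -> dt_computable H g -> dt_computable H' g.
Proof. by move=> HH' [T [hT eT]]; exists T; split=> //; apply: le_trans HH'. Qed.

Lemma dt_computable_const H b : 0 <= H -> dt_computable H (fun _ => b).
Proof. by move=> H_ge0; exists (Leaf U b). Qed.

Definition override (us : seq U) (rho x : U -> bool) : U -> bool :=
  fun u => if u \in us then rho u else x u.

Lemma dt_computable_query u H g :
  (forall b, dt_computable H (fun x => g (override [:: u] (fun _ => b) x))) ->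
  dt_computable (H + 1) g.
Proof.
move=> g_b; have [T0 [hT0 eT0]] := g_b false; have [T1 [hT1 eT1]] := g_b true.
exists (Node u T0 T1); split.
  by rewrite /= -addn1 natrD lerD2r /maxn; case: ifP.
move=> x /=; case xu: (x u); rewrite ?eT0 ?eT1; congr g; apply: funext => v;
  by rewrite /override mem_seq1; case: eqP => // ->; rewrite xu.
Qed.

Lemma dt_computable_queries us H g :
  (forall rho, dt_computable H (fun x => g (override us rho x))) ->
  dt_computable ((size us)%:R + H) g.
Proof.
elim: us g => [|u us IH] g g_rho.
  by rewrite add0r; apply: eq_dt_computable (g_rho (fun _ => false)).
rewrite /= -natr1 addrAC; apply: (@dt_computable_query u) => b; apply: IH => rho.
apply: eq_dt_computable (g_rho (override [:: u] (fun _ => b) rho)) => x.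
by congr g; apply: funext => v; rewrite /override in_cons mem_seq1; case: (v == u).
Qed.

End DecisionTrees.

Section RandomProjection.
Variables (R : realType) (mu : pdist R (option bool)) (beta : R).
Hypotheses (beta_gt0 : 0 < beta) (mu_Some_ge : forall b, beta <= mu (Some b)).

Lemma beta_lt1 : beta < 1.
Proof.
have := pdist_sum1 mu; rewrite (bigD1 None) //= (bigD1 (Some true)) //=.
rewrite (bigD1 (Some false)) //= big1 ?addr0; last by case=> [[]|].
have := pdist_ge0 mu None; have := mu_Some_ge true; have := mu_Some_ge false; lra.
Qed.

Section Terms.
Variables (V U : finType) (par : V -> U).
Implicit Types (t : seq (V * bool)) (f M : DNF V) (r a : {ffun V -> option bool}).

Definition phi r (x : U -> bool) (v : V) : bool :=
  if r v is Some b then b else x (par v).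

Definition fixes r t := all (fun l => r l.1 == Some l.2) t.

Definition consistent t :=
  all (fun l => all (fun l' => (l.1 == l'.1) ==> (l.2 == l'.2)) t) t.

Definition vars t : seq V := [seq l.1 | l <- t].

Definition parents t : seq U := [seq par l.1 | l <- t].

Definition parentsM M : seq U := flatten [seq parents t | t <- M].

Lemma satisfied_consistent (y : V -> bool) t :
  all (fun l => y l.1 == l.2) t -> consistent t.
Proof.
move=> /allP yt; apply/allP => l lt; apply/allP => l' l't; apply/implyP => /eqP ll'.
by move: (yt l lt) (yt l' l't); rewrite ll' => /eqP -> /eqP ->.
Qed.

Lemma evalDNF_consistent f y : evalDNF [seq t <- f | consistent t] y = evalDNF f y.
Proof.
apply/hasP/hasP => [[t] | [t tf yt]]; first by rewrite mem_filter => /andP[_ tf]; exists t.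
by exists t; rewrite // mem_filter (satisfied_consistent yt).
Qed.

Lemma evalDNF0 f y : is_wDNF 0 f -> evalDNF f y = (f != [::]).
Proof. by case: f => [|t f] //= /andP[]; rewrite leqn0 => /nilP ->. Qed.

Lemma fixes_phi r t x : fixes r t -> all (fun l => phi r x l.1 == l.2) t.
Proof. by move=> /allP rt; apply/allP => l /rt /eqP; rewrite /phi => ->. Qed.

Lemma fixes_agree t r r' : {in [set v in vars t], r =1 r'} -> fixes r t = fixes r' t.
Proof. by move=> rr'; apply: eq_in_all => l lt; rewrite rr' // inE map_f. Qed.

Lemma pr_fixes_ge t : consistent t -> beta ^+ size t <= pr mu (fixes^~ t).
Proof.
move=> /allP t_cons.
pose c v := Some (has (fun l => (l.1 == v) && l.2) t).
have cE l : l \in t -> c l.1 = Some l.2.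
  case: l => v [] lt; congr Some; first by apply/hasP; exists (v, true); rewrite /= ?eqxx.
  apply/hasP => -[[v' []] l't /= /andP[/eqP vv' _] //]; subst v'.
  by move: (t_cons _ lt) => /allP /(_ _ l't) /=; rewrite eqxx.
have -> : pr mu (fixes^~ t) = \prod_(v in [set v in vars t]) mu (c v).
  rewrite -pr_agree; apply: eq_pr => r; split => [/allP rt v | rc].
    by rewrite inE => /mapP [l lt ->]; rewrite cE //; apply/eqP/rt.
  by apply/allP => l lt; rewrite rc ?cE ?inE ?map_f.
apply: le_trans (_ : beta ^+ #|[set v in vars t]| <= _).
  apply: ler_wiXn2l; [exact: ltW beta_gt0 | exact: ltW beta_lt1 |].
  by rewrite cardsE (leq_trans (card_size _)) ?size_map.
rewrite -prodr_const; apply: ler_prod => v _.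
by rewrite (ltW beta_gt0) mu_Some_ge.
Qed.

Fixpoint greedy f : DNF V :=
  if f is t :: f' then
    let M := greedy f' in
    if has (fun u => u \in parentsM M) (parents t) then M else t :: M
  else [::].

Lemma greedy_subset f : {subset greedy f <= f}.
Proof.
elim: f => //= t0 f IH t; case: ifP => _; first by move/IH; rewrite inE => ->; rewrite orbT.
by rewrite !inE => /predU1P [-> | /IH ->]; rewrite ?eqxx ?orbT.
Qed.

Lemma greedy_cover f t :
  t \in f -> t != [::] -> has (fun l => par l.1 \in parentsM (greedy f)) t.
Proof.
elim: f => //= t0 f IH; rewrite inE => /predU1P [-> nt | tf nt].
  case: ifPn => [| _]; first by rewrite has_map.
  case: t0 nt => [|l t'] // _; apply/hasP; exists l; first exact: mem_head.
  by rewrite /parentsM /= mem_head.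
case: ifP => _; first exact: IH.
apply: sub_has (IH tf nt) => l; rewrite /parentsM /= mem_cat => ->; exact: orbT.
Qed.

Lemma size_parentsM w M :
  all (fun t => size t <= w)%N M -> (size (parentsM M) <= w * size M)%N.
Proof.
elim: M => //= t M IH /andP [st sM].
by rewrite /parentsM /= size_cat size_map mulnS leq_add // IH.
Qed.

Lemma pr_greedy_none w f : all consistent f -> all (fun t => size t <= w)%N f ->
  pr mu (fun r => forall t, t \in greedy f -> ~~ fixes r t) <=
  (1 - beta ^+ w) ^+ size (greedy f).
Proof.
elim: f => [|t f IH] /=; first by rewrite expr0 pr_le1.
move=> /andP[ct cf] /andP[st sf]; case: ifPn => [_ | disj]; first exact: IH.
set noneM := fun r => forall t', t' \in greedy f -> ~~ fixes r t'.
rewrite (@eq_pr _ _ _ _ _ (fun r => ~~ fixes r t /\ noneM r)); last first.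
  move=> r; split => [nf | [nft nfM] t']; last by rewrite inE => /predU1P [-> | /nfM].
  by split => [|t' t'M]; apply: nf; rewrite inE ?eqxx ?t'M ?orbT.
rewrite (pr_indep mu (B := [set v in vars t])); first last.
- move=> r r' rr' nfM t' t'M; rewrite -(fixes_agree (r := r)) ?nfM // => v.
  rewrite inE => /mapP [l lt' ->]; apply: rr'; rewrite !inE.
  apply: contra disj => /mapP [l0 l0t e].
  apply/hasP; exists (par l.1); first by rewrite e; apply: map_f.
  by apply/flattenP; exists (parents t'); [apply: map_f | apply: map_f].
- by move=> r r' rr'; rewrite (fixes_agree rr').
rewrite exprS; apply: ler_pM; [exact: pr_ge0 | exact: pr_ge0 | | exact: IH].
rewrite (@eq_pr _ _ _ _ _ (fun r => ~ fixes r t)); last by move=> r; split => /negP.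
rewrite prC lerD2l lerN2; apply: le_trans (pr_fixes_ge ct).
by apply: ler_wiXn2l; [exact: ltW beta_gt0 | exact: ltW beta_lt1 |].
Qed.

(* The parents in [us] are answered by membership in [S]; [a] supplies the fixed
   coordinates below them. *)
Definition restrict (us : seq U) f a (S : {set U}) : DNF V :=
  [seq [seq l <- t | par l.1 \notin us] |
     t <- f & all (fun l => (par l.1 \in us) ==> (phi a (fun u => u \in S) l.1 == l.2)) t].

Lemma all_phi_override us r rho x t :
  all (fun l => phi r (override us rho x) l.1 == l.2) t =
  all (fun l => (par l.1 \in us) ==>
                (phi r (fun u => u \in [set u in us | rho u]) l.1 == l.2)) t &&
  all (fun l => phi r x l.1 == l.2) [seq l <- t | par l.1 \notin us].
Proof.
set S := [set u in us | rho u].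
elim: t => //= l t ->; case: (boolP (par l.1 \in us)) => us_l /=.
  have -> : phi r (override us rho x) l.1 = phi r (fun u => u \in S) l.1.
    by rewrite /phi /override /S inE us_l.
  by rewrite andbA.
have -> : phi r (override us rho x) l.1 = phi r x l.1.
  by rewrite /phi /override (negbTE us_l).
by rewrite andbCA.
Qed.

Lemma restrict_eval us f r rho x :
  evalDNF f (phi r (override us rho x)) =
  evalDNF (restrict us f r [set u in us | rho u]) (phi r x).
Proof.
rewrite /evalDNF /restrict; elim: f => //= t f ->.
by rewrite all_phi_override; case: ifP.
Qed.

Lemma restrict_wDNF us f w a S :
  (forall t, t \in f -> t != [::] -> has (fun l => par l.1 \in us) t) ->
  is_wDNF w.+1 f -> is_wDNF w (restrict us f a S).
Proof.
move=> cover /allP fw; apply/allP => t' /mapP [t]; rewrite mem_filter => /andP [_ tf] ->.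
have [-> // | nt] := eqVneq t [::].
move: (fw t tf); rewrite /= size_filter -(count_predC (fun l => par l.1 \in us)) => t_le.
rewrite -ltnS; apply: leq_trans t_le; rewrite -add1n leq_add2r.
by rewrite -has_count; apply: cover.
Qed.

Lemma restrict_agree us f a a' S : {in [set v | par v \in us], a =1 a'} ->
  restrict us f a S = restrict us f a' S.
Proof.
move=> aa'; congr map; apply: eq_filter => t; apply: eq_all => l.
by case: (boolP (par l.1 \in us)) => //= us_l; rewrite /phi aa' // inE.
Qed.

Lemma eval_restrict_agree us f a S r r' x : {in ~: [set v | par v \in us], r =1 r'} ->
  evalDNF (restrict us f a S) (phi r x) = evalDNF (restrict us f a S) (phi r' x).
Proof.
move=> rr'; apply: eq_in_has => _ /mapP [t _ ->]; apply: eq_in_all => l.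
by rewrite mem_filter => /andP [us_l _]; rewrite /phi rr' // !inE.
Qed.

Definition collapses (H : R) f r := dt_computable H (fun x => evalDNF f (phi r x)).

Lemma collapses_consistent H f r :
  collapses H [seq t <- f | consistent t] r <-> collapses H f r.
Proof.
by rewrite /collapses; split; apply: eq_dt_computable => x; rewrite evalDNF_consistent.
Qed.

Lemma collapses_fixes H f r t : 0 <= H -> t \in f -> fixes r t -> collapses H f r.
Proof.
move=> H_ge0 tf rt; apply: eq_dt_computable (dt_computable_const _ true H_ge0) => x.
by symmetry; apply/hasP; exists t => //; apply: fixes_phi.
Qed.

Lemma collapses_restrict us f r H :
  (forall rho, collapses H (restrict us f r [set u in us | rho u]) r) ->
  collapses ((size us)%:R + H) f r.
Proof.
move=> col; apply: dt_computable_queries => rho.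
by apply: eq_dt_computable (col rho) => x; rewrite restrict_eval.
Qed.

Lemma pr_collapses_fixes w f H : 0 <= H ->
  all consistent f -> all (fun t => size t <= w)%N f ->
  1 - (1 - beta ^+ w) ^+ size (greedy f) <= pr mu (collapses H f).
Proof.
move=> H_ge0 f_cons fw.
apply: le_trans (_ : 1 - pr mu (fun r => forall t, t \in greedy f -> ~~ fixes r t) <= _).
  by rewrite lerD2l lerN2; apply: pr_greedy_none.
rewrite -prC; apply: le_pr => r none_fixed.
have [t tM rt] : exists2 t, t \in greedy f & fixes r t.
  apply: contrapT => nex; apply: none_fixed => t tM; apply/negP => rt.
  exact: nex (ex_intro2 _ _ t tM rt).
exact: collapses_fixes H_ge0 (greedy_subset tM) rt.
Qed.

End Terms.

Definition collapses_whp (w : nat) (h : R) :=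
  forall (V U : finType) (par : V -> U) (f : DNF V), is_wDNF w f ->
  forall p : R, 0 < p -> 1 - p^-1 <= pr mu (collapses par (h * ln p) f).

Lemma pr_ge_small_p (V : finType) (E : {ffun V -> option bool} -> Prop) p :
  0 < p -> p <= 1 -> 1 - p^-1 <= pr mu E.
Proof.
move=> p_gt0 p_le1; apply: le_trans (pr_ge0 mu E).
by rewrite subr_le0 -invr1 lef_pV2 ?posrE.
Qed.

Lemma collapses_whp0 : collapses_whp 0 1.
Proof.
move=> V U par f f0 p p_gt0; have [p_le1 | p_gt1] := lerP p 1.
  exact: pr_ge_small_p.
have -> : pr mu (collapses par (1 * ln p) f) = 1.
  rewrite -[in RHS](prT mu V); apply: eq_pr => r; split=> // _.
  have lnp_ge0 : 0 <= 1 * ln p by rewrite mul1r ln_ge0 // ltW.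
  apply: eq_dt_computable (dt_computable_const _ (f != [::]) lnp_ge0) => x.
  by rewrite evalDNF0.
by rewrite lerBlDr lerDl invr_ge0 ltW.
Qed.

Definition rate (w : nat) : R := - ln (1 - beta ^+ w).

Lemma rate_gt0 w : 0 < rate w.+1.
Proof.
have q_gt0 : 0 < beta ^+ w.+1 by rewrite exprn_gt0.
have q_lt1 : beta ^+ w.+1 < 1 by rewrite exprn_ilt1 ?(ltW beta_gt0) ?beta_lt1.
by rewrite oppr_gt0 ln_lt0 // subr_gt0 q_lt1 ltrBlDr ltrDl q_gt0.
Qed.

Lemma rate_lt_ln m w p : 0 < p -> p^-1 < (1 - beta ^+ w.+1) ^+ m ->
  m%:R * rate w.+1 < ln p.
Proof.
move=> p_gt0 lt_p; have q_lt1 : 0 < 1 - beta ^+ w.+1.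
  by rewrite subr_gt0 exprn_ilt1 ?(ltW beta_gt0) ?beta_lt1.
have : ln p^-1 < ln ((1 - beta ^+ w.+1) ^+ m).
  by rewrite ltr_ln ?posrE ?invr_gt0 ?exprn_gt0.
rewrite lnV ?posrE // lnXn // -mulr_natl /rate; lra.
Qed.

Lemma height_budget (W lam c h m s lp : R) :
  0 < lam -> 0 <= W -> 0 <= c -> 0 <= h -> s <= W * m -> m * lam <= lp ->
  s + h * (lp + s * c) <= (W / lam + h * (1 + W * c / lam)) * lp.
Proof.
move=> lam_gt0 W_ge0 c_ge0 h_ge0 s_le m_le.
have s_le' : s <= W * lp / lam.
  by apply: le_trans s_le _; rewrite -mulrA ler_wpM2l // ler_pdivlMr.
have : h * (s * c) <= h * (W * lp / lam * c) by rewrite ler_wpM2l // ler_wpM2r.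
have -> : (W / lam + h * (1 + W * c / lam)) * lp =
          W * lp / lam + h * lp + h * (W * lp / lam * c).
  by field; rewrite gt_eqF.
rewrite mulrDr; lra.
Qed.

Lemma pr_collapses_by_queries w h (V U : finType) (par : V -> U) (f : DNF V)
    (us : seq U) p :
  collapses_whp w h ->
  (forall t, t \in f -> t != [::] -> has (fun l => par l.1 \in us) t) ->
  is_wDNF w.+1 f -> 0 < p ->
  1 - p^-1 <= pr mu (collapses par ((size us)%:R + h * ln (p * 2 ^+ size us)) f).
Proof.
move=> IH cover fw p_gt0.
set H := h * ln _; set Sets := powerset [set u in us].
pose A a r := forall S, S \in Sets -> collapses par H (restrict par us f a S) r.
apply: le_trans (_ : pr mu (fun r => A r r) <= _); last first.
  apply: le_pr => r Ar; apply: collapses_restrict => rho; apply: Ar.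
  by rewrite powersetE; apply/fintype.subsetP => u; rewrite !inE => /andP[].
apply: (pr_diag_ge (B := [set v | par v \in us])).
- by move=> r a a' aa' Aar S SS; rewrite -(restrict_agree _ _ aa'); apply: Aar.
- move=> a r r' rr' Aar S SS; apply: eq_dt_computable (Aar S SS) => x.
  exact: eval_restrict_agree.
move=> a; have p'_gt0 : 0 < p * 2 ^+ size us by rewrite mulr_gt0 ?exprn_gt0.
apply: le_trans (pr_forall_ge (e := (p * 2 ^+ size us)^-1) _) => [|S _]; last first.
  exact: IH _ _ _ _ (restrict_wDNF _ _ cover fw) _ p'_gt0.
have card_le : #|Sets|%:R <= 2 ^+ size us :> R.
  by rewrite card_powerset natrX ler_eXn2l ?ltr1n // cardsE card_size.
rewrite lerD2l lerN2 invfM mulrCA -[leRHS]mulr1.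
apply: ler_wpM2l; first by rewrite invr_ge0 ltW.
by rewrite ler_pdivrMr ?exprn_gt0 // mul1r.
Qed.

Definition next_height (w : nat) (h : R) : R :=
  w.+1%:R / rate w.+1 + h * (1 + w.+1%:R * ln 2 / rate w.+1).

Lemma next_height_gt0 w h : 0 <= h -> 0 < next_height w h.
Proof.
move=> h_ge0; have lam_gt0 := rate_gt0 w.
apply: ltr_wpDr; last by rewrite divr_gt0.
by rewrite mulr_ge0 // addr_ge0 // divr_ge0 ?mulr_ge0 ?ln_ge0 ?ler1n // ltW.
Qed.

Lemma collapses_whpS w h : 0 <= h -> collapses_whp w h ->
  collapses_whp w.+1 (next_height w h).
Proof.
move=> h_ge0 IH V U par f fw p p_gt0.
have lam_gt0 := rate_gt0 w; have ln2_ge0 : 0 <= ln (2 : R) by rewrite ln_ge0 ?ler1n.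
have h'_ge0 := ltW (next_height_gt0 w h_ge0).
have [p_le1 | p_gt1] := lerP p 1; first exact: pr_ge_small_p.
have lnp_ge0 : 0 <= ln p by rewrite ln_ge0 // ltW.
rewrite -(eq_pr _ (collapses_consistent par _ f)).
set g := [seq t <- f | consistent t].
have g_cons : all (@consistent V) g by apply: filter_all.
have gw : all (fun t => size t <= w.+1)%N g.
  by apply/allP => t; rewrite mem_filter => /andP[_]; apply: (allP fw).
set M := greedy par g; set us := parentsM par M.
have [fixed_likely | fixed_unlikely] := lerP ((1 - beta ^+ w.+1) ^+ size M) p^-1.
  apply: le_trans (pr_collapses_fixes _ (mulr_ge0 h'_ge0 lnp_ge0) g_cons gw).
  by rewrite lerD2l lerN2.
apply: le_trans (pr_collapses_by_queries IH (@greedy_cover _ _ par g) gw p_gt0) _.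
apply: le_pr => r; apply: dt_computable_le.
rewrite lnM ?posrE ?exprn_gt0 // lnXn // -[ln 2 *+ _]mulr_natl.
apply: (height_budget (m := (size M)%:R)) => //.
  rewrite -natrM ler_nat; apply: size_parentsM.
  by apply/allP => t /greedy_subset; apply: (allP gw).
by have /ltW := rate_lt_ln p_gt0 fixed_unlikely.
Qed.

Lemma collapses_whp_exists w : exists2 h, 0 < h & collapses_whp w h.
Proof.
elim: w => [|w [h h_gt0 IH]]; first by exists 1; [exact: ltr01 | exact: collapses_whp0].
exists (next_height w h); first exact: next_height_gt0 (ltW h_gt0).
exact: collapses_whpS (ltW h_gt0) IH.
Qed.

End RandomProjection.

Section Rtheta.
Variables (R : realType) (theta : R).
Hypotheses (theta_ge0 : 0 <= theta) (theta_lt1 : theta < 1).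

Definition rtheta (o : option bool) : R := if o is Some _ then (1 - theta) / 2 else theta.

Lemma rtheta_ge0 o : 0 <= rtheta o.
Proof. by case: o => [b|] //=; rewrite divr_ge0 // subr_ge0 ltW. Qed.

Lemma rtheta_sum1 : \sum_o rtheta o = 1.
Proof.
rewrite (bigD1 None) //= (bigD1 (Some true)) //= (bigD1 (Some false)) //=.
by rewrite big1 => [|[[]|]] //; field.
Qed.

Definition Rtheta : pdist R (option bool) := PDist rtheta_ge0 rtheta_sum1.

Lemma prob_Rtheta k d' (E : {ffun L k d' -> option bool} -> Prop) :
  prob theta E = pr Rtheta E.
Proof. by []. Qed.

End Rtheta.

Theorem mainTheorem17 (R : realType) (k : nat) (theta : R) (w : nat) :
  (2 <= k)%N -> 0 <= theta -> theta < 1 -> (0 < w)%N ->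
  exists h : R, 0 < h /\
  exists C : R,
    forall (d d' : nat), (1 <= d')%N -> (d' <= d)%N ->
    forall f : DNF (L k d'), is_wDNF w f ->
    forall p : R, 0 < p ->
      1 - C / p <=
      prob theta (fun r : {ffun L k d' -> option bool} =>
        exists T : DT (L k d'.-1),
          ((height T)%:R <= h * ln p) /\
          forall x : {ffun L k d'.-1 -> bool},
            evalDT T x = evalDNF f (Phi r x)).
Proof.
move=> _ theta_ge0 theta_lt1 _.
have beta_gt0 : 0 < (1 - theta) / 2 by rewrite divr_gt0 // subr_gt0.
have [h h_gt0 col] := collapses_whp_exists (mu := Rtheta theta_ge0 theta_lt1)
  beta_gt0 (fun _ => lexx _) w.
exists h; split => //; exists 1 => d d' _ _ f fw p p_gt0.
rewrite div1r prob_Rtheta; apply: le_trans (col _ _ (@parent k d') f fw p p_gt0) _.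
apply: le_pr => r [T [hT eT]]; exists T; split => // x.
by rewrite eT; congr evalDNF; apply: funext => v; rewrite ffunE.
Qed.
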